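(* Let $\mathcal{A}$ be a visibly pushdown automaton with $m$ states over the pushdown alphabet $\Sigma$. Then the $\Sigma$-diameter of $\mathcal{A}$ is at most $2^{m^2}$; that is, for all states $p,q$ such that there exists a balanced word $u\in\Sigma^*$ with $p\xrightarrow{u}q$, there exists such a balanced word of length at most $2^{m^2}$.
   Context: Pushdown alphabet $\Sigma=\Sigma_+\cup\Sigma_-\cup\Sigma_=$ (push, pop, neutral symbols); a VPA pushes one stack symbol on each push symbol, pops one on each pop symbol, and does not touch the stack on neutral symbols. A word is balanced if #push − #pop $=0$ and every prefix has #push − #pop $\geq 0$. For balanced $u$, $p\xrightarrow{u}q$ means $(\sigma,p)\xrightarrow{u}(\sigma,q)$ for some (equivalently any) stack content $\sigma$. *)

From mathcomp Require Import all_boot.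
Set Implicit Arguments. Unset Strict Implicit. Unset Printing Implicit Defensive.

Inductive symkind := Push | Pop | Neutral.

Definition symkind_eqb (x y : symkind) : bool :=
  match x, y with
  | Push, Push | Pop, Pop | Neutral, Neutral => true
  | _, _ => false end.

Record pdalphabet := PDAlphabet {
  letter : finType;
  kind : letter -> symkind
}.

Definition is_push (S : pdalphabet) (a : letter S) : bool := symkind_eqb (kind a) Push.
Definition is_pop (S : pdalphabet) (a : letter S) : bool := symkind_eqb (kind a) Pop.

Definition balanced (S : pdalphabet) (u : seq (letter S)) : bool :=
  (count (@is_push S) u == count (@is_pop S) u) &&
  [forall i : 'I_(size u).+1,
     count (@is_pop S) (take i u) <= count (@is_push S) (take i u)].

(* A (nondeterministic) visibly pushdown automaton over S with finite state set
   Q and finite stack alphabet G.  Initial/final states play no role here. *)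
Record vpa (S : pdalphabet) := VPA {
  state : finType;
  stacksym : finType;
  dpush : state -> letter S -> state -> stacksym -> bool;
  dpop : state -> letter S -> stacksym -> state -> bool;
  dneutral : state -> letter S -> state -> bool
}.

(* One step between configurations (stack, state); stack top is the head. *)
Definition vstep (S : pdalphabet) (A : vpa S)
    (c : seq (stacksym A) * state A) (a : letter S)
    (c' : seq (stacksym A) * state A) : Prop :=
  match kind a with
  | Push => exists g, c'.1 = g :: c.1 /\ dpush c.2 a c'.2 g
  | Pop => exists g, c.1 = g :: c'.1 /\ dpop c.2 a g c'.2
  | Neutral => c'.1 = c.1 /\ dneutral c.2 a c'.2
  end.

Fixpoint vrun (S : pdalphabet) (A : vpa S)
    (c : seq (stacksym A) * state A) (u : seq (letter S))
    (c' : seq (stacksym A) * state A) : Prop :=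
  match u with
  | [::] => c' = c
  | a :: u' => exists d, @vstep S A c a d /\ @vrun S A d u' c'
  end.

Definition summary (S : pdalphabet) (A : vpa S) (p : state A)
    (u : seq (letter S)) (q : state A) : Prop :=
  exists sigma : seq (stacksym A), @vrun S A (sigma, p) u (sigma, q).

From mathcomp Require Import all_boot zify.
Set Implicit Arguments. Unset Strict Implicit. Unset Printing Implicit Defensive.

(* The pairs (p, q) linked by a balanced word form the least set of pairs that
   contains the diagonal and the neutral transitions, is closed under
   composition, and is closed under wrapping a pair between a push and a pop
   of the same stack symbol.  On the m^2 pairs this least fixpoint is reached
   after m^2 rounds of the monotone closure step, and each round at most
   doubles the length of the shortest witnesses; conversely every balanced run
   decomposes along this grammar, which also shows that it restores the stack. *)

Lemma symkind_eqbP (x y : symkind) : reflect (x = y) (symkind_eqb x y).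
Proof. by case: x; case: y; constructor. Qed.

Section BalancedWords.
Variable S : pdalphabet.
Implicit Types (a b : letter S) (u v : seq (letter S)).

Local Notation pushes u := (count (@is_push S) u).
Local Notation pops u := (count (@is_pop S) u).

Lemma is_pushE a : is_push a = symkind_eqb (kind a) Push. Proof. by []. Qed.
Lemma is_popE a : is_pop a = symkind_eqb (kind a) Pop. Proof. by []. Qed.

Lemma balancedP u :
  reflect (pushes u = pops u /\ forall i, pops (take i u) <= pushes (take i u))
          (balanced u).
Proof.
apply: (iffP andP) => [[/eqP bal /forallP pre] | [bal pre]]; split=> //.
- move=> i; have [le_iu | lt_ui] := leqP i (size u).
    exact: (pre (Ordinal (le_iu : i < (size u).+1))).
  by rewrite take_oversize ?bal // ltnW.
- exact/eqP.
- by apply/forallP=> i; apply: pre.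
Qed.

Lemma balanced_nil : balanced (S := S) [::].
Proof. by apply/balancedP; split=> // -[]. Qed.

Lemma balanced_cat u v : balanced u -> balanced v -> balanced (u ++ v).
Proof.
move=> /balancedP[bal_u pre_u] /balancedP[bal_v pre_v]; apply/balancedP; split.
  by rewrite !count_cat bal_u bal_v.
move=> i; rewrite take_cat; case: ltnP => _; first exact: pre_u.
by rewrite !count_cat bal_u leq_add2l.
Qed.

Lemma balanced_neutral a : kind a = Neutral -> balanced [:: a].
Proof.
by move=> Ka; apply/balancedP; split=> [|[|i]] /=; rewrite ?is_pushE ?is_popE ?Ka.
Qed.

Lemma balanced_nest a v b :
  kind a = Push -> kind b = Pop -> balanced v -> balanced (a :: v ++ [:: b]).
Proof.
move=> Ka Kb /balancedP[bal_v pre_v]; apply/balancedP.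
rewrite /= !count_cat /= !is_pushE !is_popE Ka Kb /=; split; first lia.
case=> [|i] //=; rewrite is_pushE is_popE Ka /= take_cat.
case: ltnP => _; first by have := pre_v i; lia.
rewrite !count_cat; case: (i - size v) => [|j] /=;
  by rewrite ?is_pushE ?is_popE ?Kb /=; lia.
Qed.

Lemma balanced_take_drop u j :
  balanced u -> pops (take j u) = pushes (take j u) ->
  balanced (take j u) /\ balanced (drop j u).
Proof.
move=> /balancedP[bal_u pre_u] level0; split; apply/balancedP.
- by split=> [|i]; rewrite -?take_min.
- split=> [|i].
  + have := congr1 (count (@is_push S)) (cat_take_drop j u).
    have := congr1 (count (@is_pop S)) (cat_take_drop j u).
    by rewrite !count_cat; lia.
  + by have := pre_u (j + i); rewrite takeD !count_cat; lia.
Qed.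

Lemma balanced_irreducible u :
  balanced u -> 0 < size u ->
  (forall i, 0 < i < size u -> pops (take i u) < pushes (take i u)) ->
  (exists2 a, u = [:: a] & kind a = Neutral) \/
  (exists a v b, [/\ u = a :: v ++ [:: b], kind a = Push, kind b = Pop & balanced v]).
Proof.
case: u => [|a r] // /balancedP[bal _] _ inner.
case/lastP: r => [|v b] in bal inner *.
  left; exists a => //; move: bal => /=; rewrite is_pushE is_popE.
  by case: (kind a).
right; exists a, v, b; rewrite -cats1 in bal inner *.
have {}inner i : 0 < i <= (size v).+1 ->
    pops (take i (a :: v ++ [:: b])) < pushes (take i (a :: v ++ [:: b])).
  by move=> range_i; apply: inner; rewrite /= size_cat addn1.
have Ka : kind a = Push.
  have := inner 1 isT; rewrite /= take0 is_pushE is_popE.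
  by case: (kind a).
have [bal_v Kb] : pushes v = pops v /\ kind b = Pop.
  have := inner (size v).+1; rewrite /= take_size_cat // => /(_ (ltnSn _)).
  clear inner; move: bal; rewrite /= !count_cat /= !is_pushE !is_popE Ka /=.
  case: (kind b) => /= bal inner_v; try by exfalso; lia.
  by split=> //; lia.
split=> //; apply/balancedP; split=> // i.
have [le_iv | lt_vi] := leqP i (size v); last by rewrite take_oversize ?bal_v // ltnW.
have := inner i.+1; rewrite /= takel_cat // is_pushE is_popE Ka /=.
by rewrite ltnS le_iv => /(_ isT); lia.
Qed.

Lemma balanced_cases u :
  balanced u -> 0 < size u ->
  [\/ exists v w, [/\ u = v ++ w, 0 < size v, 0 < size w, balanced v & balanced w],
      exists2 a, u = [:: a] & kind a = Neutral
    | exists a v b, [/\ u = a :: v ++ [:: b], kind a = Push, kind b = Pop & balanced v]].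
Proof.
move=> bal_u u_gt0.
case: (pickP (fun j : 'I_(size u) => (0 < j) && (pops (take j u) == pushes (take j u)))).
  move=> [j /= lt_ju] /andP[j_gt0 /eqP level0]; apply: Or31.
  have [bal_l bal_r] := balanced_take_drop bal_u level0.
  exists (take j u), (drop j u); rewrite cat_take_drop size_take size_drop lt_ju.
  by split=> //; rewrite subn_gt0.
move=> no_split.
have inner i : 0 < i < size u -> pops (take i u) < pushes (take i u).
  case/andP=> i_gt0 lt_iu; have := no_split (Ordinal lt_iu); rewrite /= i_gt0 /=.
  by move/balancedP: bal_u => [_ pre]; have := pre i; lia.
by case: (balanced_irreducible bal_u u_gt0 inner) => [? | ?]; [apply: Or32 | apply: Or33].
Qed.

End BalancedWords.

Section Summaries.
Variables (S : pdalphabet) (A : vpa S).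
Implicit Types (a b : letter S) (u v : seq (letter S)) (p q r : state A).
Implicit Types (s : seq (stacksym A)) (c d : seq (stacksym A) * state A).
Implicit Types (T : {set state A * state A}).

Lemma vrun1 a c d : vrun c [:: a] d <-> vstep c a d.
Proof. by split=> [[e [step_a ->]] | step_a]; last exists d. Qed.

Lemma vrun_cat u v c d : vrun c (u ++ v) d <-> exists2 e, vrun c u e & vrun e v d.
Proof.
elim: u c => [|a u IH] c /=; first by split=> [|[e ->]]; first exists c.
split=> [[e [step_a /IH[f run_u run_v]]] | [f [e [step_a run_u]] run_v]].
  by exists f => //; exists e.
by exists e; split=> //; apply/IH; exists f.
Qed.

Definition uniform_summary u p q :=
  balanced u /\ forall s, vrun (A := A) (s, p) u (s, q).

Lemma uniform_summary_nil p : uniform_summary [::] p p.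
Proof. by split=> //; apply: balanced_nil. Qed.

Lemma uniform_summary_neutral a p q :
  kind a = Neutral -> dneutral p a q -> uniform_summary [:: a] p q.
Proof.
move=> Ka step_a; split=> [|s]; first exact: balanced_neutral.
by apply/vrun1; rewrite /vstep Ka.
Qed.

Lemma uniform_summary_cat u v p r q :
  uniform_summary u p r -> uniform_summary v r q -> uniform_summary (u ++ v) p q.
Proof.
move=> [bal_u run_u] [bal_v run_v]; split=> [|s]; first exact: balanced_cat.
by apply/vrun_cat; exists (s, r).
Qed.

Lemma uniform_summary_nest a b g p p' q' q v :
  kind a = Push -> kind b = Pop -> dpush p a p' g -> uniform_summary v p' q' ->
  dpop q' b g q -> uniform_summary (a :: v ++ [:: b]) p q.
Proof.
move=> Ka Kb push_a [bal_v run_v] pop_b; split=> [|s]; first exact: balanced_nest.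
exists (g :: s, p'); split; first by rewrite /vstep Ka; exists g.
by apply/vrun_cat; exists (g :: s, q'); last by apply/vrun1; rewrite /vstep Kb; exists g.
Qed.

Definition summary_step (T : {set state A * state A}) : {set state A * state A} :=
  [set x | [|| x.1 == x.2,
    [exists a, symkind_eqb (kind a) Neutral && dneutral x.1 a x.2],
    [exists r, ((x.1, r) \in T) && ((r, x.2) \in T)] |
    [exists a, exists b, exists g, exists p', exists q',
      [&& symkind_eqb (kind a) Push, symkind_eqb (kind b) Pop,
          dpush x.1 a p' g, (p', q') \in T & dpop q' b g x.2]]]].

Lemma summary_stepP T p q :
  reflect
    [\/ p = q,
        exists2 a, kind a = Neutral & dneutral p a q,
        exists2 r, (p, r) \in T & (r, q) \in T
      | exists a b g p' q', [/\ kind a = Push, kind b = Pop, dpush p a p' g,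
                                (p', q') \in T & dpop q' b g q]]
    ((p, q) \in summary_step T).
Proof.
rewrite inE /=; apply: (iffP or4P).
  case=> [/eqP | /existsP[a /andP[/symkind_eqbP]] | /existsP[r /andP[]] | ].
  - by apply: Or41.
  - by move=> Ka step_a; apply: Or42; exists a.
  - by move=> pr rq; apply: Or43; exists r.
  move=> /existsP[a /existsP[b /existsP[g /existsP[p' /existsP[q' /and5P[]]]]]].
  move=> /symkind_eqbP Ka /symkind_eqbP Kb push_a Tpq' pop_b.
  by apply: Or44; exists a, b, g, p', q'.
case=> [-> | [a Ka step_a] | [r pr rq] | [a [b [g [p' [q' [Ka Kb push_a Tpq' pop_b]]]]]]].
- by apply: Or41.
- by apply: Or42; apply/existsP; exists a; rewrite Ka.
- by apply: Or43; apply/existsP; exists r; apply/andP.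
apply: Or44; apply/existsP; exists a; apply/existsP; exists b; apply/existsP; exists g.
by apply/existsP; exists p'; apply/existsP; exists q'; rewrite Ka Kb push_a Tpq' pop_b.
Qed.

Lemma summary_step_mono : {homo summary_step : T T' / T \subset T'}.
Proof.
move=> T T' /subsetP sTT'; apply/subsetP=> -[p q] /summary_stepP step_pq.
apply/summary_stepP; case: step_pq => [| | [r pr rq] | [a [b [g [p' [q' []]]]]]].
- exact: Or41.
- exact: Or42.
- by apply: Or43; exists r; apply: sTT'.
by move=> *; apply: Or44; exists a, b, g, p', q'; split=> //; apply: sTT'.
Qed.

Lemma uniform_summary_iter k p q :
  (p, q) \in iter k summary_step set0 ->
  exists2 u, uniform_summary u p q & size u <= 2 ^ k.
Proof.
elim: k p q => [|k IH] p q /=; first by rewrite inE.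
have pos_k : 0 < 2 ^ k by rewrite expn_gt0.
case/summary_stepP=> [-> | [a Ka step_a] | [r /IH[u sum_u size_u] /IH[v sum_v size_v]] |
                      [a [b [g [p' [q' [Ka Kb push_a Tpq' pop_b]]]]]]].
- by exists [::]; first exact: uniform_summary_nil.
- by exists [:: a]; [exact: uniform_summary_neutral | rewrite /= expnS; lia].
- by exists (u ++ v); [exact: uniform_summary_cat sum_v | rewrite size_cat expnS; lia].
have k_gt0 : 0 < k by case: k {IH pos_k} Tpq'; rewrite ?inE.
have [v sum_v size_v] := IH _ _ Tpq'.
exists (a :: v ++ [:: b]); first exact: uniform_summary_nest sum_v pop_b.
rewrite /= size_cat /= expnS; have : 2 <= 2 ^ k by rewrite -{1}(expn1 2) leq_exp2l.
lia.
Qed.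

Local Notation summaries := (fixset summary_step).

Lemma summariesE : summary_step summaries = summaries.
Proof. exact: fixsetK summary_step_mono. Qed.

Lemma balanced_run_summaries u s s' p q :
  balanced u -> vrun (s, p) u (s', q) -> s' = s /\ (p, q) \in summaries.
Proof.
have [n] := ubnP (size u); elim: n => // n IH in u s s' p q *.
move=> lt_un bal_u run; rewrite -summariesE.
have [/size0nil u0 | u_gt0] := posnP (size u).
  by move: run; rewrite u0 => -[-> ->]; split=> //; apply/summary_stepP/Or41.
case: (balanced_cases bal_u u_gt0) =>
  [[v [w [u_vw v_gt0 w_gt0 bal_v bal_w]]] | [a u_a Ka] | [a [v [b [u_avb Ka Kb bal_v]]]]].
- move: lt_un run; rewrite u_vw size_cat => lt_vwn /vrun_cat[[t r] run_v run_w].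
  have [eq_t pr] := IH v _ _ _ _ ltac:(lia) bal_v run_v; subst t.
  have [-> rq] := IH w _ _ _ _ ltac:(lia) bal_w run_w.
  by split=> //; apply/summary_stepP/Or43; exists r.
- move: run; rewrite u_a => /vrun1; rewrite /vstep Ka /= => -[-> step_a].
  by split=> //; apply/summary_stepP/Or42; exists a.
move: lt_un run; rewrite u_avb /= size_cat addn1 => lt_vn.
case=> -[t p'] [step_a /vrun_cat[[t' q'] run_v /vrun1 step_b]].
move: step_a step_b; rewrite /vstep Ka Kb /=.
move=> -[g [eq_t push_a]] [g' [eq_pop pop_b]]; subst t.
have [eq_t' pq'] := IH v _ _ _ _ ltac:(lia) bal_v run_v.
move: eq_t'; rewrite eq_pop => -[eq_g eq_s]; subst g' s'.
by split=> //; apply/summary_stepP/Or44; exists a, b, g, p', q'.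
Qed.

End Summaries.

Theorem fact3 (S : pdalphabet) (A : vpa S) (p q : state A) :
  (exists u : seq (letter S), balanced u /\ summary p u q) ->
  exists u : seq (letter S),
    [/\ balanced u, summary p u q & size u <= 2 ^ (#|state A| ^ 2)].
Proof.
move=> [u [bal_u [s run_u]]].
have [_ pq] := balanced_run_summaries bal_u run_u.
move: pq; rewrite /fixset card_prod mulnn.
case/uniform_summary_iter=> v [bal_v run_v] size_v.
by exists v; split=> //; exists [::].
Qed.
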